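(* Let $\alpha,\beta,\gamma\in\mathbb{H}$ be three distinct pairwise equivalent quaternions. Then for every integer $k\ge0$, $$\gamma^k=(\gamma-\beta)(\alpha-\beta)^{-1}\alpha^k+(\alpha-\gamma)(\alpha-\beta)^{-1}\beta^k.$$
   Context: $\mathbb{H}$ denotes the real quaternions. Two quaternions $\alpha,\beta$ are equivalent if $\alpha=q^{-1}\beta q$ for some nonzero $q\in\mathbb{H}$; equivalently, $\mathrm{Re}(\alpha)=\mathrm{Re}(\beta)$ and $|\alpha|=|\beta|$. *)

From Stdlib Require Import Reals.
Open Scope R_scope.

Record quat : Type := Quat { qr : R; qi : R; qj : R; qk : R }.

Definition qzero : quat := Quat 0 0 0 0.
Definition qone : quat := Quat 1 0 0 0.

Definition qadd (p q : quat) : quat :=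
  Quat (qr p + qr q) (qi p + qi q) (qj p + qj q) (qk p + qk q).

Definition qopp (p : quat) : quat := Quat (- qr p) (- qi p) (- qj p) (- qk p).

Definition qsub (p q : quat) : quat := qadd p (qopp q).

(* Hamilton product: i^2 = j^2 = k^2 = ijk = -1 *)
Definition qmul (p q : quat) : quat :=
  Quat (qr p * qr q - qi p * qi q - qj p * qj q - qk p * qk q)
       (qr p * qi q + qi p * qr q + qj p * qk q - qk p * qj q)
       (qr p * qj q - qi p * qk q + qj p * qr q + qk p * qi q)
       (qr p * qk q + qi p * qj q - qj p * qi q + qk p * qr q).

Definition qnorm2 (q : quat) : R :=
  qr q * qr q + qi q * qi q + qj q * qj q + qk q * qk q.

Definition qconj (q : quat) : quat := Quat (qr q) (- qi q) (- qj q) (- qk q).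

Definition qinv (q : quat) : quat :=
  let n := qnorm2 q in
  Quat (qr q / n) (- qi q / n) (- qj q / n) (- qk q / n).

Fixpoint qpow (q : quat) (k : nat) : quat :=
  match k with
  | O => qone
  | S k' => qmul q (qpow q k')
  end.

Definition qequiv (a b : quat) : Prop :=
  exists q : quat, q <> qzero /\ a = qmul (qmul (qinv q) b) q.

(** Every quaternion [q] is a root of its real characteristic polynomial
    [X^2 - 2 Re(q) X + |q|^2], so the powers of [q] satisfy the linear
    recurrence [u(k+2) = 2 Re(q) u(k+1) - |q|^2 u(k)] with real coefficients.
    Equivalent quaternions share [Re] and [| |], hence this recurrence.  The
    right-hand side is a left-linear combination of the powers of [alpha] and
    [beta], so it satisfies the recurrence as well (the coefficients are real,
    hence central), and it agrees with [gamma^k] for [k = 0, 1]. *)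

From Stdlib Require Import Reals Lra Psatz.
Open Scope R_scope.

Definition qcomb (r s : R) (x y : quat) : quat :=
  Quat (r * qr x + s * qr y) (r * qi x + s * qi y)
       (r * qj x + s * qj y) (r * qk x + s * qk y).

Lemma qmul_1r q : qmul q qone = q.
Proof. destruct q; unfold qmul, qone; simpl; f_equal; ring. Qed.

Lemma qmul_qcomb c r s x y : qmul c (qcomb r s x y) = qcomb r s (qmul c x) (qmul c y).
Proof. destruct c, x, y; unfold qmul, qcomb; simpl; f_equal; ring. Qed.

Lemma qcomb_qadd r s x1 y1 x2 y2 :
  qcomb r s (qadd x1 x2) (qadd y1 y2) = qadd (qcomb r s x1 y1) (qcomb r s x2 y2).
Proof. destruct x1, y1, x2, y2; unfold qadd, qcomb; simpl; f_equal; ring. Qed.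

Lemma qmul_cayley_hamilton q y :
  qmul q (qmul q y) = qcomb (2 * qr q) (- qnorm2 q) (qmul q y) y.
Proof. destruct q, y; unfold qmul, qcomb, qnorm2; simpl; f_equal; ring. Qed.

Lemma qnorm2_neq0 q : q <> qzero -> qnorm2 q <> 0.
Proof.
  destruct q as [a b c d]; unfold qnorm2, qzero; simpl; intros Hq Hn; apply Hq.
  assert (a = 0) by nra; assert (b = 0) by nra.
  assert (c = 0) by nra; assert (d = 0) by nra.
  now subst.
Qed.

Lemma qsub_neq0 p q : p <> q -> qsub p q <> qzero.
Proof.
  intros Hpq E; apply Hpq.
  destruct p, q; unfold qsub, qadd, qopp, qzero in E; simpl in E.
  injection E; intros; f_equal; lra.
Qed.

Lemma qequiv_re_norm2 a b : qequiv a b -> qr a = qr b /\ qnorm2 a = qnorm2 b.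
Proof.
  intros [q [Hq ->]]; pose proof (qnorm2_neq0 q Hq) as Hn.
  destruct q, b; unfold qnorm2 in Hn; unfold qmul, qinv, qnorm2; simpl.
  split; field; exact Hn.
Qed.

Section LinearRecurrence.

Variables r s : R.

Definition solves_rec (u : nat -> quat) : Prop :=
  forall k, u (S (S k)) = qcomb r s (u (S k)) (u k).

Lemma solves_rec_lcomb c d u v :
  solves_rec u -> solves_rec v ->
  solves_rec (fun k => qadd (qmul c (u k)) (qmul d (v k))).
Proof.
  intros Hu Hv k; rewrite Hu, Hv, !qmul_qcomb.
  symmetry; apply qcomb_qadd.
Qed.

Lemma solves_rec_unique u v :
  solves_rec u -> solves_rec v -> u 0%nat = v 0%nat -> u 1%nat = v 1%nat ->
  forall k, u k = v k.
Proof.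
  intros Hu Hv H0 H1.
  assert (Hboth : forall k, u k = v k /\ u (S k) = v (S k)).
  { induction k as [|k [IHk IHSk]]; [now split|].
    split; [exact IHSk|]; now rewrite Hu, Hv, IHk, IHSk. }
  intro k; exact (proj1 (Hboth k)).
Qed.

End LinearRecurrence.

Lemma qpow_solves_rec q : solves_rec (2 * qr q) (- qnorm2 q) (qpow q).
Proof. intro k; apply qmul_cayley_hamilton. Qed.

Lemma qinterp_base alpha beta gamma : alpha <> beta ->
  let c1 := qmul (qsub gamma beta) (qinv (qsub alpha beta)) in
  let c2 := qmul (qsub alpha gamma) (qinv (qsub alpha beta)) in
  qadd c1 c2 = qone /\ qadd (qmul c1 alpha) (qmul c2 beta) = gamma.
Proof.
  intros Hab; pose proof (qnorm2_neq0 _ (qsub_neq0 _ _ Hab)) as Hn.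
  destruct alpha, beta, gamma.
  unfold qnorm2, qsub, qadd, qopp in Hn; simpl in Hn.
  unfold qmul, qadd, qsub, qopp, qinv, qnorm2, qone; simpl.
  split; f_equal; field; exact Hn.
Qed.

Theorem mainTheorem4 (alpha beta gamma : quat)
  (Hab : alpha <> beta) (Hbc : beta <> gamma) (Hac : alpha <> gamma)
  (Eab : qequiv alpha beta) (Ebc : qequiv beta gamma) (Eac : qequiv alpha gamma) :
  forall k : nat,
    qpow gamma k =
    qadd (qmul (qmul (qsub gamma beta) (qinv (qsub alpha beta))) (qpow alpha k))
         (qmul (qmul (qsub alpha gamma) (qinv (qsub alpha beta))) (qpow beta k)).
Proof.
  destruct (qequiv_re_norm2 _ _ Eab) as [Rab Nab].
  destruct (qequiv_re_norm2 _ _ Ebc) as [Rbc Nbc].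
  destruct (qinterp_base alpha beta gamma Hab) as [Base0 Base1].
  apply (solves_rec_unique (2 * qr gamma) (- qnorm2 gamma)).
  - apply qpow_solves_rec.
  - apply solves_rec_lcomb.
    + rewrite <- Rbc, <- Nbc, <- Rab, <- Nab; apply qpow_solves_rec.
    + rewrite <- Rbc, <- Nbc; apply qpow_solves_rec.
  - simpl; rewrite !qmul_1r; symmetry; exact Base0.
  - simpl; rewrite !qmul_1r; symmetry; exact Base1.
Qed.
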